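(* Let $F$ be an infinite field and let $R$ be a unital $F$-algebra (not necessarily associative) with $\dim_F R<\infty$. Let $f,g,h:R\to F$ be polynomial functions with $f=g\cdot h$ and $g(1)=h(1)=1$. Then $f$ is multiplicative if and only if both $g$ and $h$ are multiplicative.
   Context: A polynomial function $R\to F$ is one given, in coordinates with respect to an $F$-basis $a_1,\dots,a_m$ of $R$, by a polynomial in $F[x_1,\dots,x_m]$. A function $\phi:R\to F$ is multiplicative if $\phi(ab)=\phi(a)\phi(b)$ for all $a,b\in R$. *)

From HB Require Import structures.
From mathcomp Require Import all_boot all_order all_algebra.
From mathcomp Require Import mpoly.
Set Implicit Arguments. Unset Strict Implicit. Unset Printing Implicit Defensive.
Import Order.TTheory GRing.Theory.
Local Open Scope ring_scope.

Definition infinite_field (F : fieldType) : Prop :=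
  forall s : seq F, exists x : F, x \notin s.

Record unital_algebra (F : fieldType) (R : vectType F) (mul : R -> R -> R)
    (one : R) : Prop := {
  mulDl : forall (a : F) (x y z : R), mul (a *: x + y) z = a *: mul x z + mul y z;
  mulDr : forall (a : F) (x y z : R), mul x (a *: y + z) = a *: mul x y + mul x z;
  mul1x : forall x : R, mul one x = x;
  mulx1 : forall x : R, mul x one = x
}.

Definition polynomial_fun (F : fieldType) (R : vectType F) (f : R -> F) : Prop :=
  exists b : (\dim (fullv : {vspace R})).-tuple R,
    basis_of fullv b /\
    exists p : {mpoly F[\dim (fullv : {vspace R})]},
      forall x : R, f x = p.@[fun i => coord b i x].

Definition multiplicative (F : fieldType) (R : vectType F) (mul : R -> R -> R)
    (f : R -> F) : Prop :=
  forall a b : R, f (mul a b) = f a * f b.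

From Pilot Require Import Defs.
From HB Require Import structures.
From mathcomp Require Import all_boot all_order all_algebra.
From mathcomp Require Import mpoly ring.
From Stdlib Require Import Classical.
Set Implicit Arguments. Unset Strict Implicit. Unset Printing Implicit Defensive.
Import GRing.Theory.
(* GRing.Theory shadows Defs.multiplicative. *)
Import Defs.
Local Open Scope ring_scope.

(* Fix x, y and put M(s, t) = (1 + s(x - 1)) (1 + t(y - 1)), G = g o M and
   H = h o M, so that G(1, 1) = g(xy), G(1, 0) = g(x), G(0, 1) = g(y) and
   G(0, 0) = g(1). As the product is bilinear and unital, G and H are
   polynomial in each variable separately, and multiplicativity of f gives
   G(s, t) H(s, t) = P(s) Q(t) with P(s) = f(1 + s(x - 1)), Q(t) = f(1 + t(y - 1)).
   For each of the infinitely many s with P(s) != 0, G(s, .) divides Q; since Q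
   has only finitely many divisors up to scalars, infinitely many of the G(s, .)
   are proportional. Hence G(s, t) G(s0, t0) = G(s, t0) G(s0, t) for infinitely
   many s, so for all s by polynomiality in s, and at the corners of the unit
   square this reads g(xy) g(1) = g(x) g(y). *)

Definition infinite (T : eqType) (S : T -> Prop) :=
  forall l : seq T, exists2 x, S x & x \notin l.

Definition polyfun (R : nzRingType) (u : R -> R) :=
  exists p : {poly R}, forall x, u x = p.[x].

Definition separated (R : nzRingType) (G : R -> R -> R) :=
  forall s1 s2 t1 t2, G s1 t1 * G s2 t2 = G s1 t2 * G s2 t1.

Section Infinite.
Variable T : eqType.
Implicit Types S : T -> Prop.

Lemma not_infinite_cover S : ~ infinite S -> exists l : seq T, forall x, S x -> x \in l.
Proof.
move=> notinfS; apply: NNPP => nocover; apply: notinfS => l.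
apply: NNPP => noout; apply: nocover; exists l => x Sx.
by apply: NNPP => /negP xl; apply: noout; exists x.
Qed.

Lemma infinite_setD S (l : seq T) : infinite S -> infinite (fun x => S x /\ x \notin l).
Proof.
move=> infS l'; have [x Sx] := infS (l ++ l').
by rewrite mem_cat negb_or => /andP[xl xl']; exists x.
Qed.

Lemma infinite_uniq_seq S n : infinite S ->
  exists s : seq T, [/\ uniq s, size s = n & forall x, x \in s -> S x].
Proof.
move=> infS; elim: n => [|n [s [uniq_s size_s sS]]]; first by exists [::].
have [x Sx xs] := infS s; exists (x :: s); split => /=; [by rewrite xs | by rewrite size_s |].
by move=> y /predU1P[->|/sS].
Qed.

Lemma infinite_pigeonhole (A : eqType) S (C : T -> A -> Prop) (cls : seq A) :
  infinite S -> (forall x, S x -> exists2 e, e \in cls & C x e) ->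
  exists2 e, e \in cls & infinite (fun x => S x /\ C x e).
Proof.
elim: cls S => [|e cls IH] S infS covered; first by have [x /covered[]] := infS [::].
have [infe|/not_infinite_cover[l cover]] := classic (infinite (fun x => S x /\ C x e)).
  by exists e; rewrite ?mem_head.
have [e' e'cls infe'] :
    exists2 e', e' \in cls & infinite (fun x => (S x /\ x \notin l) /\ C x e').
  apply: IH => [|x [Sx xl]]; first exact: infinite_setD.
  have [e'' /predU1P[-> Cxe|]] := covered x Sx; last by exists e''.
  by rewrite cover in xl.
exists e'; first by rewrite inE e'cls orbT.
by move=> l'; have [x [[Sx _] Cxe'] xl'] := infe' l'; exists x.
Qed.

End Infinite.

Lemma infinite_fieldT (F : fieldType) : infinite_field F -> infinite (fun _ : F => True).
Proof. by move=> infF l; have [x xl] := infF l; exists x. Qed.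

Section PolyOnInfiniteSets.
Variable R : idomainType.
Implicit Types (S : R -> Prop) (p q : {poly R}).

Lemma poly_eq_on_infinite S p q : infinite S -> (forall x, S x -> p.[x] = q.[x]) -> p = q.
Proof.
move=> infS eq_pq; apply/eqP; rewrite -subr_eq0; apply/negPn/negP => pq_neq0.
have [s [uniq_s size_s sS]] := infinite_uniq_seq (size (p - q)) infS.
have roots_s : all (root (p - q)) s.
  by apply/allP => x /sS Sx; rewrite rootE !hornerE eq_pq ?subrr.
by have := max_poly_roots pq_neq0 roots_s uniq_s; rewrite size_s ltnn.
Qed.

Lemma polyfun_eq_on_infinite S (u v : R -> R) : infinite S ->
  polyfun u -> polyfun v -> (forall x, S x -> u x = v x) -> forall x, u x = v x.
Proof.
move=> infS [p up] [q vq] eq_uv x; rewrite up vq.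
by congr _.[x]; apply: (poly_eq_on_infinite infS) => y Sy; rewrite -up -vq eq_uv.
Qed.

Lemma polyfun_mull (u : R -> R) c : polyfun u -> polyfun (fun x => c * u x).
Proof. by move=> [p up]; exists (c *: p) => x; rewrite hornerZ up. Qed.

End PolyOnInfiniteSets.

Lemma infinite_field_nonroots (F : fieldType) (p : {poly F}) :
  infinite_field F -> p != 0 -> infinite (fun x => p.[x] != 0).
Proof.
move=> infF p_neq0; apply: NNPP => /not_infinite_cover[l cover].
move/eqP: p_neq0; apply; apply: (poly_eq_on_infinite (infinite_setD l (infinite_fieldT infF))).
move=> x [_ xl]; rewrite horner0; apply/eqP; apply: NNPP => /negP px.
by rewrite cover in xl.
Qed.

Section DivisorsUpToAssociates.
Variable F : fieldType.
Implicit Types d p q : {poly F}.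

Lemma dvdp_mul_split d p q : p != 0 -> d %| p * q ->
  exists e1 e2, [/\ e1 %| p, e2 %| q & d = e1 * e2].
Proof.
move=> p_neq0 d_pq; set e := gcdp d p.
have e_neq0 : e != 0 by rewrite gcdp_eq0 negb_and p_neq0 orbT.
exists e, (d %/ e); split; [exact: dvdp_gcdr | | by rewrite mulrC divpK ?dvdp_gcdl].
have : d %/ e * e %| p %/ e * q * e by rewrite divpK ?dvdp_gcdl // mulrAC divpK ?dvdp_gcdr.
by rewrite dvdp_mul2r // Gauss_dvdpr // coprimep_div_gcd // p_neq0 orbT.
Qed.

Lemma dvdp_eqp_finite q : q != 0 ->
  exists ds : seq {poly F}, forall d, d %| q -> exists2 e, e \in ds & d %= e.
Proof.
have [n] := ubnP (size q); elim: n q => // n IH q; rewrite ltnS => size_q q_neq0.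
have [[d0 [d0q size_d0 d0_nassoc]]|] :=
  classic (exists d0, [/\ d0 %| q, size d0 != 1%N & ~~ (d0 %= q)]); last first.
  move=> no_proper; exists [:: 1; q] => d dq.
  have [/eqP|size_d] := eqVneq (size d) 1%N.
    by rewrite size_poly_eq1 => d_unit; exists 1; rewrite ?mem_head.
  exists q; first by rewrite !inE eqxx orbT.
  by apply: NNPP => /negP d_nassoc; apply: no_proper; exists d.
have d0_neq0 : d0 != 0 by apply: contraNneq q_neq0 => d0_eq0; rewrite -dvd0p -d0_eq0.
set q2 := q %/ d0; have qE : q = q2 * d0 by rewrite divpK.
have q2_neq0 : q2 != 0 by apply: contraNneq q_neq0 => q2_eq0; rewrite qE q2_eq0 mul0r.
have lt_d0q : (size d0 < size q)%N by rewrite ltn_neqAle dvdp_size_eqp // d0_nassoc dvdp_leq.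
have lt_q2q : (size q2 < size q)%N.
  have : (1 < size d0)%N by rewrite ltn_neqAle eq_sym size_d0 lt0n size_poly_eq0.
  rewrite qE size_mul //; case: (size d0) => [|[|k]] // _.
  by rewrite !addnS /= ltnS leq_addr.
have [ds1 divs1] := IH q2 (leq_trans lt_q2q size_q) q2_neq0.
have [ds2 divs2] := IH d0 (leq_trans lt_d0q size_q) d0_neq0.
exists [seq e1 * e2 | e1 <- ds1, e2 <- ds2] => d; rewrite qE.
move=> /(dvdp_mul_split q2_neq0)[e1 [e2 [e1q2 e2d0 ->]]].
have [x1 x1ds1 e1x1] := divs1 _ e1q2; have [x2 x2ds2 e2x2] := divs2 _ e2d0.
exists (x1 * x2); first exact: allpairs_f.
exact: eqp_trans (eqp_mulr _ e1x1) (eqp_mull _ e2x2).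
Qed.

End DivisorsUpToAssociates.

Lemma eqp_horner_cross (F : fieldType) (p q : {poly F}) x y :
  p %= q -> p.[x] * q.[y] = p.[y] * q.[x].
Proof. by move=> /eqpfP->; rewrite !hornerZ; ring. Qed.

Lemma separated_pivot (R : idomainType) (G : R -> R -> R) s0 t0 : G s0 t0 != 0 ->
  (forall s t, G s t * G s0 t0 = G s t0 * G s0 t) -> separated G.
Proof.
move=> pivot_neq0 cross s1 s2 t1 t2; apply: (mulIf pivot_neq0); apply: (mulIf pivot_neq0).
transitivity ((G s1 t1 * G s0 t0) * (G s2 t2 * G s0 t0)); first ring.
transitivity ((G s1 t2 * G s0 t0) * (G s2 t1 * G s0 t0)); last ring.
by rewrite !cross; ring.
Qed.

Section SeparatedFactor.
Variables (F : fieldType) (G H : F -> F -> F) (P Q : {poly F}).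
Hypotheses (infF : infinite_field F) (P_neq0 : P != 0) (Q_neq0 : Q != 0).
Hypotheses (polyfun_Gr : forall s, polyfun (G s)) (polyfun_Gl : forall t, polyfun (G^~ t)).
Hypotheses (polyfun_H : forall s, polyfun (H s)).
Hypothesis GH_split : forall s t, G s t * H s t = P.[s] * Q.[t].

Let section_eqp s e := exists p : {poly F}, [/\ forall t, G s t = p.[t], p != 0 & p %= e].

Lemma dvdp_section s : P.[s] != 0 ->
  exists p : {poly F}, [/\ forall t, G s t = p.[t], p != 0 & p %| Q].
Proof.
move=> Ps_neq0; have [p Gp] := polyfun_Gr s; have [r Hr] := polyfun_H s.
have pr : p * r = P.[s] *: Q.
  apply: (poly_eq_on_infinite (infinite_fieldT infF)) => t _.
  by rewrite hornerM hornerZ -Gp -Hr GH_split.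
exists p; split => //; last by rewrite -(dvdpZr _ _ Ps_neq0) -pr dvdp_mulr.
have : p * r != 0 by rewrite pr scale_poly_eq0 negb_or Ps_neq0.
by apply: contraNneq => ->; rewrite mul0r.
Qed.

Lemma infinite_proportional_sections : exists e, infinite (section_eqp ^~ e).
Proof.
have [ds divs] := dvdp_eqp_finite Q_neq0.
have [|e _ infe] :=
  @infinite_pigeonhole _ _ _ section_eqp ds (infinite_field_nonroots infF P_neq0).
  move=> s /dvdp_section[p [Gp p_neq0 pQ]]; have [e eds pe] := divs p pQ.
  by exists e => //; exists p.
by exists e => l; have [s [_ se] sl] := infe l; exists s.
Qed.

Lemma separated_factor : separated G.
Proof.
have [e infe] := infinite_proportional_sections.
have [s0 [p0 [Gp0 p0_neq0 p0e]] _] := infe [::].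
have [t0 p0t0 _] := infinite_field_nonroots infF p0_neq0 [::].
apply: (@separated_pivot _ G s0 t0); first by rewrite Gp0.
move=> s t; rewrite mulrC [RHS]mulrC; move: s.
apply: (polyfun_eq_on_infinite infe); [exact: polyfun_mull | exact: polyfun_mull |].
move=> s [p [Gp _ pe]]; rewrite !Gp !Gp0.
by apply: eqp_horner_cross; apply: eqp_trans p0e _; rewrite eqp_sym.
Qed.

End SeparatedFactor.

Lemma polyfun_meval_affine (R : comNzRingType) n (p : {mpoly R[n]}) (c d : 'I_n -> R) :
  polyfun (fun s => p.@[fun i => s * c i + d i]).
Proof.
exists (\sum_(m <- msupp p) p@_m *: \prod_i (c i *: 'X + (d i)%:P) ^+ m i) => s.
rewrite mevalE horner_sum; apply: eq_bigr => m _.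
rewrite hornerZ horner_prod; congr (_ * _); apply: eq_bigr => i _.
by rewrite horner_exp !hornerE mulrC.
Qed.

Lemma polynomial_fun_line (F : fieldType) (R : vectType F) (g : R -> F) (u v : R) :
  polynomial_fun g -> polyfun (fun s => g (s *: v + u)).
Proof.
move=> [b [_ [p gp]]].
have [q pq] := polyfun_meval_affine p (fun i => coord b i v) (fun i => coord b i u).
by exists q => s; rewrite gp -pq; apply: meval_eq => i /=; rewrite linearD linearZ.
Qed.

Section UnitalAlgebra.
Variables (F : fieldType) (R : vectType F) (mul : R -> R -> R) (one : R).
Hypothesis alg : unital_algebra mul one.

Definition on_mul_lines (g : R -> F) (a b : R) (s t : F) :=
  g (mul (s *: a + one) (t *: b + one)).

Lemma polyfun_on_mul_lines_r g a b s : polynomial_fun g -> polyfun (on_mul_lines g a b s).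
Proof.
move=> pg; have [p gp] := polynomial_fun_line (s *: a + one) (mul (s *: a + one) b) pg.
by exists p => t; rewrite /on_mul_lines (mulDr alg) (mulx1 alg) gp.
Qed.

Lemma polyfun_on_mul_lines_l g a b t :
  polynomial_fun g -> polyfun (fun s => on_mul_lines g a b s t).
Proof.
move=> pg; have [p gp] := polynomial_fun_line (t *: b + one) (mul a (t *: b + one)) pg.
by exists p => s; rewrite /on_mul_lines (mulDl alg) (mul1x alg) gp.
Qed.

Lemma multiplicative_factor (f g h : R -> F) :
  infinite_field F -> polynomial_fun f -> polynomial_fun g -> polynomial_fun h ->
  (forall x, f x = g x * h x) -> multiplicative mul f -> f one != 0 -> g one = 1 ->
  multiplicative mul g.
Proof.
move=> infF pf pg ph fgh fM f1_neq0 g1 x y.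
set a := x - one; set b := y - one.
have [P fP] := polynomial_fun_line one a pf; have [Q fQ] := polynomial_fun_line one b pf.
have nonzero_at0 v (p : {poly F}) : (forall s, f (s *: v + one) = p.[s]) -> p != 0.
  move=> fp; apply: contra_neq f1_neq0 => p_eq0.
  by have := fp 0; rewrite scale0r add0r p_eq0 horner0.
have sepG : separated (on_mul_lines g a b).
  apply: (separated_factor (H := on_mul_lines h a b) infF
           (nonzero_at0 _ _ fP) (nonzero_at0 _ _ fQ)).
  - by move=> s; apply: polyfun_on_mul_lines_r.
  - by move=> t; apply: polyfun_on_mul_lines_l.
  - by move=> s; apply: polyfun_on_mul_lines_r.
  - by move=> s t; rewrite /on_mul_lines -fgh fM fP fQ.
have := sepG 1 0 1 0; rewrite /on_mul_lines !scale1r !scale0r !add0r !subrK.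
by rewrite !(mulx1 alg) (mul1x alg) g1 mulr1.
Qed.

End UnitalAlgebra.

Theorem proposition2p4 (F : fieldType) (R : vectType F)
    (mul : R -> R -> R) (one : R) (f g h : R -> F) :
  infinite_field F ->
  unital_algebra mul one ->
  polynomial_fun f -> polynomial_fun g -> polynomial_fun h ->
  (forall x : R, f x = g x * h x) ->
  g one = 1 -> h one = 1 ->
  (multiplicative mul f <-> multiplicative mul g /\ multiplicative mul h).
Proof.
move=> infF alg pf pg ph fgh g1 h1.
have f1_neq0 : f one != 0 by rewrite fgh g1 h1 mulr1 oner_neq0.
split=> [fM | [gM hM] x y]; last by rewrite !fgh gM hM mulrACA.
split; first exact: (multiplicative_factor alg infF pf pg ph fgh).
by apply: (multiplicative_factor alg infF pf ph pg) => // z; rewrite fgh mulrC.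
Qed.
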